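(* For every $n \geq 3$ and every $i \in \{1,\ldots,n\}$, the number of arrangements in $\{D_n\}$ whose first entry is $i$ is exactly $Der_{n-1}$.
   Context: A linear arrangement of $\{1,\ldots,n\}$ is a sequence $a_1\cdots a_n$ in which each of $1,\ldots,n$ appears exactly once. It contains the pattern $ij$ if $a_t=i$ and $a_{t+1}=j$ for some $t$; otherwise it avoids it. $\{D_n\}$ is the set of linear arrangements of $\{1,\ldots,n\}$ avoiding all of the patterns $12, 23, \ldots, (n-1)n, n1$. $Der_{m}$ is the number of permutations of $\{1,\ldots,m\}$ with no fixed point. *)

From mathcomp Require Import all_boot all_fingroup.
Set Implicit Arguments. Unset Strict Implicit. Unset Printing Implicit Defensive.

(* A linear arrangement a_1 ... a_n of {1,...,n} is encoded as a permutation
   s : 'S_n, with a_{t+1} = (s t) + 1 for t : 'I_n (0-based positions and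
   0-based values: value k : 'I_n stands for the number k+1). *)

Definition contains_pattern n (s : 'S_n) (i j : nat) : bool :=
  [exists t : 'I_n, (t.+1 < n) && (s t == i.-1 :> nat) &&
     [exists u : 'I_n, (val u == t.+1) && (s u == j.-1 :> nat)]].

(* The forbidden patterns 12, 23, ..., (n-1)n, n1. *)
Definition in_D n (s : 'S_n) : bool :=
  [forall k : 'I_n, ~~ contains_pattern s k.+1 (if k.+1 == n then 1 else k.+2)].

Definition Der (m : nat) : nat := #|[set s : 'S_m | [forall x, s x != x]]|.

From mathcomp Require Import all_boot all_fingroup zify.
Set Implicit Arguments. Unset Strict Implicit. Unset Printing Implicit Defensive.

(* Rotating all values cyclically maps the forbidden patterns 12, ..., (n-1)n, n1 onto
   themselves, so every first entry gives the same count and we may take it to be 1; the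
   pattern n1 is then impossible. With 0-based values we count the words 0 w, w a
   permutation of {1, ..., m} (m = n - 1), having no succession x, x+1 with x < m.
   For these words, and for the permutations of {0, ..., m-1} with "fixed point x" in
   place of "succession x", the number of objects avoiding a set T of features obeys the
   same deletion-contraction recurrence: the objects avoiding a :: T are those avoiding T
   minus those having feature a and avoiding T, and the latter correspond to objects of
   size m - 1 avoiding the relabelled T (merge the letters a, a+1; delete the fixed point
   a). Hence both numbers equal avoid_count m m, and the second one is Der m. *)

Lemma count_bij (T1 T2 : eqType) (s1 : seq T1) (s2 : seq T2)
    (P1 : pred T1) (P2 : pred T2) (f : T1 -> T2) (g : T2 -> T1) :
  uniq s1 -> uniq s2 ->
  {in s1, forall x, P1 x -> [/\ f x \in s2, P2 (f x) & g (f x) = x]} ->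
  {in s2, forall y, P2 y -> [/\ g y \in s1, P1 (g y) & f (g y) = y]} ->
  count P1 s1 = count P2 s2.
Proof.
move=> uniq_s1 uniq_s2 fP gP; rewrite -!size_filter -(size_map f).
apply/perm_size/uniq_perm; last 1 first.
- move=> y; rewrite mem_filter; apply/mapP/andP => [[x]|[P2y s2y]].
    by rewrite mem_filter => /andP[P1x /fP] /(_ P1x)[? ? _] ->.
  by have [s1gy P1gy fgy] := gP y s2y P2y; exists (g y); rewrite ?mem_filter ?P1gy.
- rewrite map_inj_in_uniq ?filter_uniq // => x x'.
  rewrite !mem_filter => /andP[P1x s1x] /andP[P1x' s1x'] fx.
  by have [_ _ <-] := fP x s1x P1x; have [_ _ <-] := fP x' s1x' P1x'; rewrite fx.
- exact: filter_uniq.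
Qed.

Lemma perm_iotaE (s : seq nat) k :
  perm_eq s (iota 0 k) = [&& uniq s, size s == k & all (gtn k) s].
Proof.
apply/idP/and3P => [p | [uniq_s /eqP size_s /allP lt_s]].
  rewrite (perm_uniq p) (perm_size p) iota_uniq size_iota; split=> //.
  by apply/allP => y; rewrite (perm_mem p) mem_iota.
apply: uniq_perm; rewrite ?iota_uniq //.
have [|//|_ //] := uniq_min_size uniq_s (s2 := iota 0 k).
  by move=> y /lt_s; rewrite mem_iota.
by rewrite size_iota size_s.
Qed.

Definition avoids (P : nat -> pred (seq nat)) (T : seq nat) : pred (seq nat) :=
  fun u => all (fun a => ~~ P a u) T.

(* By inclusion-exclusion, avoid_count m t = \sum_(k <= t) (-1)^k 'C(t, k) (m - k)`!
   whenever t <= m. *)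
Fixpoint avoid_count m t :=
  if t is t'.+1 then avoid_count m t' - avoid_count m.-1 t' else m`!.

Lemma count_avoids_cons (P : nat -> pred (seq nat)) a T s :
  count (avoids P (a :: T)) s + count (predI (P a) (avoids P T)) s
  = count (avoids P T) s.
Proof.
rewrite -[RHS]size_filter -(count_predC (P a)) !count_filter addnC.
by congr (_ + _); apply: eq_count.
Qed.

Lemma unbump_ltn a m x : a < m.+1 -> x < m.+1 -> x != a -> unbump a x < m.
Proof. by rewrite /unbump; case: ltnP; lia. Qed.

Lemma bump_ltn a m y : y < m -> bump a y < m.+1.
Proof. by rewrite /bump; case: (a <= y) => /=; lia. Qed.

Lemma bump_eq a x y : x != a -> (bump a y == x) = (y == unbump a x).
Proof. by move=> xa; rewrite -{1}(unbumpK xa) (can_eq (bumpK a)). Qed.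

Section DeletionContraction.

Variables (X : nat -> seq (seq nat)) (P : nat -> pred (seq nat)).
Hypothesis size_X : forall m, size (X m) = m`!.
Hypothesis count_contract : forall m a T, a <= m -> a \notin T -> all (gtn m.+1) T ->
  count (predI (P a) (avoids P T)) (X m.+1) = count (avoids P (map (unbump a) T)) (X m).

Lemma count_avoids m T :
  uniq T -> all (gtn m) T -> count (avoids P T) (X m) = avoid_count m (size T).
Proof.
have count_avoids_nil k : count (avoids P [::]) (X k) = k`!.
  by rewrite (eq_count (a2 := predT)) // count_predT size_X.
elim: m T => [|m IHm] T.
  by case: T => [|a T] /=; [rewrite count_avoids_nil | case/andP].
elim: T => [|a T IHT] /=; first by rewrite count_avoids_nil.
case/andP=> aT uniqT /andP[am Tm].
have a_unbumpK : {in T, cancel (unbump a) (bump a)}.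
  by move=> x xT; apply: unbumpK; apply: contraNneq aT => <-.
have uniq_Ta : uniq (map (unbump a) T) by rewrite (map_inj_in_uniq (can_in_inj a_unbumpK)).
have Ta_m : all (gtn m) (map (unbump a) T).
  rewrite all_map; apply/allP => x xT /=; apply: unbump_ltn am (allP Tm x xT) _.
  by apply: contraNneq aT => <-.
by rewrite -IHT // -(count_avoids_cons P a T) count_contract // IHm // size_map addnK.
Qed.

End DeletionContraction.

Definition fixpt a (d : seq nat) := nth 0 d a == a.

Definition insert_fixpt a d :=
  mkseq (fun x => if x == a then a else bump a (nth 0 d (unbump a x))) (size d).+1.

Definition delete_fixpt a d := mkseq (fun y => unbump a (nth 0 d (bump a y))) (size d).-1.

Lemma size_insert_fixpt a d : size (insert_fixpt a d) = (size d).+1.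
Proof. exact: size_mkseq. Qed.

Lemma nth_insert_fixpt a d x : x <= size d ->
  nth 0 (insert_fixpt a d) x = if x == a then a else bump a (nth 0 d (unbump a x)).
Proof. by move=> xd; rewrite nth_mkseq. Qed.

Lemma fixpt_insert_fixpt_id a d : a <= size d -> fixpt a (insert_fixpt a d).
Proof. by move=> ad; rewrite /fixpt nth_insert_fixpt // eqxx. Qed.

Lemma fixpt_insert_fixpt a d x : x <= size d -> x != a ->
  fixpt x (insert_fixpt a d) = fixpt (unbump a x) d.
Proof. by move=> xd xa; rewrite /fixpt nth_insert_fixpt // (negbTE xa) bump_eq. Qed.

Lemma avoids_insert_fixpt a d T : a \notin T -> all (leq^~ (size d)) T ->
  avoids fixpt T (insert_fixpt a d) = avoids fixpt (map (unbump a) T) d.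
Proof.
move=> aT /allP Td; rewrite /avoids all_map; apply: eq_in_all => x xT /=.
by rewrite fixpt_insert_fixpt ?Td //; apply: contraNneq aT => <-.
Qed.

Lemma delete_insert_fixpt a d : delete_fixpt a (insert_fixpt a d) = d.
Proof.
apply: (@eq_from_nth nat 0) => [|y]; rewrite size_mkseq size_insert_fixpt //= => yd.
have bump_y : bump a y <= size d := bump_ltn a yd.
rewrite nth_mkseq ?size_insert_fixpt // nth_insert_fixpt //.
by rewrite eq_sym (negbTE (neq_bump a y)) !bumpK.
Qed.

Lemma insert_delete_fixpt a d : uniq d -> a < size d -> fixpt a d ->
  insert_fixpt a (delete_fixpt a d) = d.
Proof.
move=> uniq_d + /eqP da; case size_d: (size d) => [//|k] ak.
have size_del : size (delete_fixpt a d) = k by rewrite size_mkseq size_d.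
apply: (@eq_from_nth nat 0) => [|x]; rewrite size_insert_fixpt size_del // => xk.
rewrite nth_insert_fixpt ?size_del //; have [->|xa] := eqVneq x a; first by rewrite da.
rewrite nth_mkseq; last by rewrite size_d; exact: unbump_ltn ak xk xa.
rewrite [bump a (unbump a x)]unbumpK ?inE // unbumpK // inE -da.
by rewrite nth_uniq ?size_d.
Qed.

Lemma insert_fixpt_perm a m d : a <= m -> perm_eq d (iota 0 m) ->
  perm_eq (insert_fixpt a d) (iota 0 m.+1).
Proof.
rewrite !perm_iotaE size_insert_fixpt => am /and3P[uniq_d /eqP size_d /allP d_lt].
have d_nth_lt y : y < m -> nth 0 d y < m by move=> ym; apply: d_lt; rewrite mem_nth ?size_d.
rewrite /insert_fixpt /mkseq size_d eqxx; apply/andP; split; last first.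
  apply/allP => z /mapP[x]; rewrite mem_iota => /andP[_ xm] ->.
  by case: eqVneq => //= xa; rewrite bump_ltn // d_nth_lt // unbump_ltn.
rewrite map_inj_in_uniq ?iota_uniq // => x y; rewrite !mem_iota /= => xm ym.
have [-> | xa] := eqVneq x a; have [-> | ya] := eqVneq y a => //.
- by move/eqP; rewrite (negbTE (neq_bump _ _)).
- by move/esym/eqP; rewrite (negbTE (neq_bump _ _)).
move/(can_inj (bumpK a))/eqP; rewrite nth_uniq ?size_d ?unbump_ltn // => /eqP.
by move/(can_in_inj (@unbumpK a)); apply; rewrite inE.
Qed.

Lemma delete_fixpt_perm a m d : a <= m -> perm_eq d (iota 0 m.+1) -> fixpt a d ->
  perm_eq (delete_fixpt a d) (iota 0 m).
Proof.
rewrite !perm_iotaE => am /and3P[uniq_d /eqP size_d /allP d_lt] /eqP da.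
have bump_lt y : y < m -> bump a y < size d by rewrite size_d; apply: bump_ltn.
have nth_bump_neq y : y < m -> nth 0 d (bump a y) != a.
  by move=> ym; rewrite -{2}da nth_uniq ?bump_lt ?size_d // eq_sym neq_bump.
rewrite /delete_fixpt /mkseq size_d /=; apply/and3P; split.
- rewrite map_inj_in_uniq ?iota_uniq // => x y; rewrite !mem_iota /= => xm ym.
  move/(can_in_inj (@unbumpK a)); rewrite !inE !nth_bump_neq // => /(_ isT isT)/eqP.
  by rewrite nth_uniq ?bump_lt // => /eqP/(can_inj (bumpK a)).
- by rewrite size_map size_iota.
apply/allP => z /mapP[y]; rewrite mem_iota /= => ym ->.
by apply: unbump_ltn am (d_lt _ (mem_nth 0 (bump_lt y ym))) (nth_bump_neq y ym).
Qed.

Lemma count_fixpt_contract m a T : a <= m -> a \notin T -> all (gtn m.+1) T ->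
  count (predI (fixpt a) (avoids fixpt T)) (permutations (iota 0 m.+1))
  = count (avoids fixpt (map (unbump a) T)) (permutations (iota 0 m)).
Proof.
move=> am aT Tm; have T_le k : k = m -> all (leq^~ k) T by move->.
apply: (count_bij (f := delete_fixpt a) (g := insert_fixpt a)); rewrite ?permutations_uniq //.
- move=> d; rewrite mem_permutations => d_perm /andP[/= da d_avoids].
  have del_perm := delete_fixpt_perm am d_perm da.
  have ins_del : insert_fixpt a (delete_fixpt a d) = d.
    by rewrite insert_delete_fixpt ?(perm_uniq d_perm) ?iota_uniq ?(perm_size d_perm) ?size_iota.
  rewrite mem_permutations del_perm -avoids_insert_fixpt ?ins_del //.
  by apply: T_le; rewrite (perm_size del_perm) size_iota.
move=> d; rewrite mem_permutations => d_perm d_avoids.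
have size_d : size d = m by rewrite (perm_size d_perm) size_iota.
rewrite mem_permutations insert_fixpt_perm // delete_insert_fixpt.
by rewrite /= fixpt_insert_fixpt_id ?avoids_insert_fixpt ?size_d ?T_le.
Qed.

Fixpoint adjacent x y (s : seq nat) : bool :=
  if s is z :: t then (z == x) && (ohead t == Some y) || adjacent x y t else false.

Definition succession a u := adjacent a a.+1 u.

Lemma adjacent_meml x y s : adjacent x y s -> x \in s.
Proof.
elim: s => //= z t IHt /orP[/andP[/eqP-> _]|/IHt]; first exact: mem_head.
by rewrite inE orbC => ->.
Qed.

Lemma adjacent_memr x y s : adjacent x y s -> y \in s.
Proof.
elim: s => //= z t IHt /orP[/andP[_]|/IHt]; last by rewrite inE orbC => ->.
by case: t {IHt} => //= w t /eqP[->]; rewrite !inE eqxx orbT.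
Qed.

Lemma adjacent_map f x y s : injective f -> adjacent (f x) (f y) (map f s) = adjacent x y s.
Proof.
move=> inj_f; elim: s => //= z t ->; rewrite (inj_eq inj_f).
by case: t => //= w t; congr (_ && _ || _); apply/eqP/eqP => [[/inj_f ->] | [->]].
Qed.

Lemma adjacentP x y w :
  reflect (exists t, [/\ t.+1 < size w, nth 0 w t = x & nth 0 w t.+1 = y]) (adjacent x y w).
Proof.
apply: (iffP idP) => [|[t []]].
  elim: w => //= z w IHw /orP[/andP[/eqP <-] | /IHw[t [? ? ?]]]; last by exists t.+1.
  by case: w {IHw} => //= z' w /eqP[<-]; exists 0.
elim: w t => //= z w IHw [|t] /=; last by move=> ? ? ?; rewrite (IHw t) ?orbT.
by case: w {IHw} => //= z' w _ -> ->; rewrite !eqxx.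
Qed.

Fixpoint insert_after a b (s : seq nat) : seq nat :=
  if s is z :: t then if z == a then z :: b :: t else z :: insert_after a b t else [::].

Lemma ohead_insert_after a b s : ohead (insert_after a b s) = ohead s.
Proof. by case: s => //= z t; case: ifP. Qed.

Lemma mem_insert_after a b s y : y \in insert_after a b s -> (y == b) || (y \in s).
Proof.
elim: s => //= z t IHt; case: ifP => _; rewrite !inE; first by case/or3P => ->; rewrite ?orbT.
by case/orP => [-> | /IHt /orP[] ->]; rewrite ?orbT.
Qed.

Lemma size_insert_after a b s : a \in s -> size (insert_after a b s) = (size s).+1.
Proof. by elim: s => //= z t IHt; rewrite inE eq_sym; case: ifP => //= _ /IHt ->. Qed.

Lemma uniq_insert_after a b s : uniq s -> b \notin s -> uniq (insert_after a b s).
Proof.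
elim: s => //= z t IHt /andP[zt uniq_t]; rewrite inE negb_or => /andP[bz bt].
case: ifP => _ /=; first by rewrite inE negb_or eq_sym bz zt bt uniq_t.
rewrite IHt // andbT; apply: contra zt => /mem_insert_after /orP[/eqP zb|//].
by rewrite zb eqxx in bz.
Qed.

Lemma rem_insert_after a b s : b \notin s -> rem b (insert_after a b s) = s.
Proof.
elim: s => //= z t IHt; rewrite inE negb_or eq_sym => /andP[zb bt].
by case: ifP => _ /=; rewrite (negbTE zb) ?IHt ?eqxx.
Qed.

Lemma adjacent_insert_after a b p q s : p != a -> b \notin s -> uniq s ->
  adjacent p q (insert_after a b s) = if p == b then adjacent a q s else adjacent p q s.
Proof.
move=> pa; elim: s => //= [|z t IHt]; first by case: ifP.
rewrite inE negb_or => /andP[bz bt] /andP[zt uniq_t].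
have adjacent_notin x y : x \notin t -> adjacent x y t = false.
  by move=> xt; apply: contraNF xt; apply: adjacent_meml.
case: eqVneq => [za | za] /=; rewrite ?ohead_insert_after ?IHt //.
  rewrite za [a == p]eq_sym (negbTE pa) /=; case: (eqVneq p b) => [-> | //].
  by rewrite !adjacent_notin -?za // !orbF.
by case: (eqVneq p b) => [-> | //]; rewrite eq_sym (negbTE bz).
Qed.

Lemma adjacent_insert_after_id a b s : a \in s -> adjacent a b (insert_after a b s).
Proof.
elim: s => //= z t IHt; rewrite inE; case: eqVneq => [-> | za] /=; first by rewrite !eqxx.
by rewrite eq_sym (negbTE za) => /IHt ->; rewrite orbT.
Qed.

Lemma insert_after_rem a b s : uniq s -> adjacent a b s -> insert_after a b (rem b s) = s.
Proof.
elim: s => //= z t IHt /andP[zt uniq_t] /orP[/andP[/eqP za] | ab].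
  case: t zt {IHt uniq_t} => //= w t zt /eqP[wb]; rewrite -za -wb.
  by move: zt; rewrite inE negb_or => /andP[/negbTE-> _]; rewrite eqxx /= eqxx.
have zb : z != b by apply: contraNneq zt => ->; apply: adjacent_memr ab.
have za : z != a by apply: contraNneq zt => ->; apply: adjacent_meml ab.
by rewrite (negbTE zb) /= (negbTE za) IHt.
Qed.

Definition expand_succ a v := insert_after a a.+1 (map (bump a.+1) v).

Definition contract_succ a u := map (unbump a.+1) (rem a.+1 u).

Lemma notin_map_bump a v : a \notin map (bump a) v.
Proof. by apply/mapP => -[y _] /eqP; rewrite (negbTE (neq_bump a y)). Qed.

Lemma bump_unbump_succ a x : x != a -> x != a.+1 -> bump a.+1 (unbump a x) = x.
Proof. by rewrite /bump /unbump; case: ltngtP => [||->] /=; lia. Qed.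

Lemma succession_expand a v x : x != a -> uniq v ->
  succession x (expand_succ a v) = succession (unbump a x) v.
Proof.
move=> xa uniq_v; have bump_inj := can_inj (bumpK a.+1).
rewrite /succession adjacent_insert_after ?notin_map_bump ?map_inj_uniq //.
case: eqVneq => [-> | xa1].
  have -> : unbump a a.+1 = a by rewrite /unbump ltnSn subn1.
  by rewrite -(adjacent_map a a.+1 v bump_inj) /bump ltnn leqnn.
by rewrite -(adjacent_map _ _ v bump_inj) bump_unbump_succ // bumpS unbumpK.
Qed.

Lemma succession_expand_id a v : a \in v -> succession a (expand_succ a v).
Proof.
move=> av; apply: adjacent_insert_after_id; apply/mapP; exists a => //.
by rewrite /bump ltnn.
Qed.

Lemma avoids_expand_succ a v T : a \notin T -> uniq v ->
  avoids succession T (expand_succ a v) = avoids succession (map (unbump a) T) v.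
Proof.
move=> aT uniq_v; rewrite /avoids all_map; apply: eq_in_all => x xT /=.
by rewrite succession_expand //; apply: contraNneq aT => <-.
Qed.

Lemma contract_expand a v : contract_succ a (expand_succ a v) = v.
Proof.
rewrite /contract_succ rem_insert_after ?notin_map_bump // -map_comp.
by rewrite (eq_map (bumpK a.+1)) map_id.
Qed.

Lemma expand_contract a u : uniq u -> succession a u -> expand_succ a (contract_succ a u) = u.
Proof.
move=> uniq_u au; rewrite /expand_succ /contract_succ -map_comp map_id_in ?insert_after_rem //.
by move=> y; rewrite mem_rem_uniq // inE => /andP[ya _]; apply: unbumpK.
Qed.

Lemma expand_succ_perm a m v : a <= m -> perm_eq v (iota 0 m.+1) ->
  perm_eq (expand_succ a v) (iota 0 m.+2).
Proof.
move=> am v_perm; have av : a \in map (bump a.+1) v.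
  by apply/mapP; exists a; rewrite ?(perm_mem v_perm) ?mem_iota // /bump ltnn.
move: v_perm; rewrite !perm_iotaE => /and3P[uniq_v /eqP size_v /allP v_lt].
rewrite uniq_insert_after ?notin_map_bump ?map_inj_uniq ?size_insert_after //=;
  last exact: can_inj (bumpK a.+1).
rewrite size_map size_v eqxx; apply/allP => y /mem_insert_after /orP[/eqP-> /= | ]; first lia.
by case/mapP => z /v_lt /= zm ->; apply: bump_ltn.
Qed.

Lemma contract_succ_perm a m u : a <= m -> perm_eq u (iota 0 m.+2) -> succession a u ->
  perm_eq (contract_succ a u) (iota 0 m.+1).
Proof.
rewrite !perm_iotaE => am /and3P[uniq_u /eqP size_u /allP u_lt] /adjacent_memr a1u.
have rem_neq y : y \in rem a.+1 u -> y != a.+1.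
  by rewrite mem_rem_uniq // inE => /andP[].
rewrite /contract_succ size_map size_rem // size_u eqxx /= map_inj_in_uniq ?rem_uniq //.
  apply/allP => _ /mapP[y yu ->]; apply: unbump_ltn (rem_neq y yu) => //.
  by apply: u_lt; apply: mem_rem yu.
by move=> x y /rem_neq xa /rem_neq ya; apply: (can_in_inj (@unbumpK a.+1)); rewrite inE.
Qed.

Definition zero_first_perms m := [seq u <- permutations (iota 0 m.+1) | ohead u == Some 0].

Lemma mem_zero_first_perms m u :
  (u \in zero_first_perms m) = perm_eq u (iota 0 m.+1) && (ohead u == Some 0).
Proof. by rewrite mem_filter mem_permutations andbC. Qed.

Lemma size_zero_first_perms m : size (zero_first_perms m) = m`!.
Proof.
rewrite size_filter -[m in m`!](size_iota 1 m) -size_permutations ?iota_uniq //.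
rewrite -count_predT; apply: (count_bij (f := behead) (g := cons 0)); rewrite ?permutations_uniq //.
  by move=> [|z t] // + /eqP[z0]; rewrite z0 !mem_permutations /= perm_cons.
by move=> v; rewrite !mem_permutations /= perm_cons.
Qed.

Lemma count_succession_contract m a T : a <= m -> a \notin T ->
  count (predI (succession a) (avoids succession T)) (zero_first_perms m.+1)
  = count (avoids succession (map (unbump a) T)) (zero_first_perms m).
Proof.
move=> am aT; apply: (count_bij (f := contract_succ a) (g := expand_succ a));
  rewrite ?filter_uniq ?permutations_uniq //.
- move=> u; rewrite mem_zero_first_perms => /andP[u_perm u0] /andP[/= au u_avoids].
  have uniq_u : uniq u by rewrite (perm_uniq u_perm) iota_uniq.
  have con_perm := contract_succ_perm am u_perm au.
  rewrite mem_zero_first_perms con_perm expand_contract //=; split=> //.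
    by case: u u0 {u_perm au u_avoids uniq_u con_perm} => //= z t /eqP[->].
  by rewrite -avoids_expand_succ ?(perm_uniq con_perm) ?iota_uniq ?expand_contract.
move=> v; rewrite mem_zero_first_perms => /andP[v_perm v0] v_avoids.
have uniq_v : uniq v by rewrite (perm_uniq v_perm) iota_uniq.
rewrite mem_zero_first_perms expand_succ_perm // contract_expand /=.
rewrite avoids_expand_succ // v_avoids succession_expand_id ?(perm_mem v_perm) ?mem_iota //.
by rewrite /expand_succ ohead_insert_after; case: v v0 {v_perm v_avoids uniq_v} => //= z t /eqP[->].
Qed.

Definition word n (s : 'S_n) : seq nat := [seq val (s i) | i <- enum 'I_n].

Lemma size_word n (s : 'S_n) : size (word s) = n.
Proof. by rewrite size_map size_enum_ord. Qed.

Lemma nth_word n (s : 'S_n) (i : 'I_n) : nth 0 (word s) i = s i.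
Proof. by rewrite (nth_map i) ?size_enum_ord // nth_ord_enum. Qed.

Lemma ohead_word n (s : 'S_n.+1) : ohead (word s) = Some (val (s ord0)).
Proof. by rewrite /word enum_ordSl. Qed.

Lemma word_perm n (s : 'S_n) : perm_eq (word s) (iota 0 n).
Proof.
rewrite perm_iotaE size_map size_enum_ord eqxx /word map_inj_uniq ?enum_uniq /=.
  by apply/allP => z /mapP[i _ ->]; rewrite /= ltn_ord.
by move=> i j /val_inj /perm_inj.
Qed.

Lemma word_inj n : injective (@word n).
Proof. by move=> s t st; apply/permP => i; apply: val_inj; rewrite /= -nth_word st nth_word. Qed.

Lemma word_surj n w : perm_eq w (iota 0 n) -> exists s : 'S_n, word s = w.
Proof.
rewrite perm_iotaE => /and3P[uniq_w /eqP size_w /allP w_lt].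
pose g (i : 'I_n) : 'I_n := insubd i (nth 0 w i).
have val_g i : val (g i) = nth 0 w i by rewrite insubdK //; apply: w_lt; rewrite mem_nth ?size_w.
have inj_g : injective g.
  by move=> i j /(congr1 val); rewrite !val_g => /eqP; rewrite nth_uniq ?size_w // => /eqP/val_inj.
exists (perm inj_g); apply: (@eq_from_nth nat 0) => [|k]; rewrite size_map size_enum_ord ?size_w //.
by move=> kn; rewrite -[k]/(val (Ordinal kn)) nth_word permE val_g.
Qed.

Lemma card_perm_word n (P : pred (seq nat)) :
  #|[set s : 'S_n | P (word s)]| = count P (permutations (iota 0 n)).
Proof.
rewrite cardE /enum_mem size_filter -enumT (eq_count (a2 := P \o @word n)) => [|s]; last first.
  by rewrite -[mem _ s]/(s \in _) inE.
rewrite -count_map; apply/seq.permP/uniq_perm; rewrite ?permutations_uniq //.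
  by rewrite map_inj_uniq ?enum_uniq //; apply: word_inj.
move=> w; rewrite mem_permutations; apply/mapP/idP => [[s _ ->] | /word_surj[s <-]].
  exact: word_perm.
by exists s; rewrite ?mem_enum.
Qed.

Lemma val_ordS n (k : 'I_n) : val (ordS k) = (if k.+1 == n then 1 else k.+2).-1.
Proof.
rewrite /=; case: eqP => [-> | kn]; first by rewrite modnn.
by rewrite modn_small // ltn_neqAle ltn_ord andbT; apply/eqP.
Qed.

Lemma in_DE n (s : 'S_n) :
  in_D s = [forall t : 'I_n, forall u : 'I_n, (u == t.+1 :> nat) ==> (s u != ordS (s t))].
Proof.
apply/forallP/forallP => [D t | D k].
  apply/forallP => u; apply/implyP => /eqP ut; apply: contraNneq (D (s t)) => sus.
  apply/existsP; exists t; rewrite -ut ltn_ord eqxx /=.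
  by apply/existsP; exists u; rewrite ut sus val_ordS !eqxx.
apply/existsP => -[t /andP[/andP[_ /eqP stk] /existsP[u /andP[ut /eqP suk]]]].
have stk' : s t = k by apply: val_inj.
have sus : s u = ordS k by apply: val_inj; rewrite val_ordS; exact: suk.
by move: (D t) => /forallP/(_ u); rewrite ut stk' sus eqxx.
Qed.

Lemma in_D_mulr n (s r : 'S_n) : {morph r : x / ordS x} -> in_D (s * r)%g = in_D s.
Proof.
move=> r_ordS; rewrite !in_DE; apply: eq_forallb => t; apply: eq_forallb => u.
by rewrite !permM -r_ordS (inj_eq perm_inj).
Qed.

Definition ord_rot n : 'S_n := perm (@ordS_inj n).

Lemma ord_rotX_ordS n k : {morph (ord_rot n ^+ k)%g : x / ordS x}.
Proof.
move=> x; rewrite -[ordS x](permE (@ordS_inj n)) -[ordS (_ x)](permE (@ordS_inj n)).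
by rewrite -!permM (commuteX k (commute_refl (ord_rot n))).
Qed.

Lemma val_ord_rotX n (x : 'I_n) k : val ((ord_rot n ^+ k)%g x) = (x + k) %% n.
Proof.
rewrite permX; elim: k => [|k IHk]; first by rewrite addn0 modn_small.
by rewrite iterS permE /= IHk -addn1 modnDml addn1 addnS.
Qed.

Lemma card_in_D_first_eq0 m (c : 'I_m.+1) :
  #|[set s : 'S_m.+1 | in_D s & s ord0 == c]| = #|[set s : 'S_m.+1 | in_D s & s ord0 == ord0]|.
Proof.
pose r := (ord_rot m.+1 ^+ (m.+1 - c))%g.
have rc : r c = ord0 by apply: val_inj; rewrite val_ord_rotX subnKC ?modnn // ltnW.
rewrite -[RHS](card_preimset _ (mulIg r)); apply: eq_card => s.
by rewrite !inE in_D_mulr ?permM -?rc ?(inj_eq perm_inj) //; apply: ord_rotX_ordS.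
Qed.

Lemma in_D_first0 m (s : 'S_m.+1) :
  s ord0 = ord0 -> in_D s = avoids succession (iota 0 m) (word s).
Proof.
move=> s0; rewrite in_DE.
apply/forallP/allP => [D x | D t].
  rewrite mem_iota => xm; apply/adjacentP => -[t [tm stx sux]].
  rewrite size_word in tm; have tm' : t < m.+1 by lia.
  move: D => /(_ (Ordinal tm'))/forallP/(_ (Ordinal tm))/implyP/(_ (eqxx _)); apply/negP/negPn.
  apply/eqP/val_inj; rewrite /= -(nth_word s (Ordinal tm)) -(nth_word s (Ordinal tm')) /= stx sux.
  by rewrite modn_small.
apply/forallP => u; apply/implyP => /eqP ut; apply/eqP => sus.
have [stm | stm] := eqVneq (nat_of_ord (s t)) m.
  (* the wrap-around pattern m, 0 would put 0 in position t + 1 > 0 *)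
  have /perm_inj u0 : s u = s ord0 by rewrite s0 sus; apply: val_inj; rewrite /= stm modnn.
  by move: ut; rewrite u0.
have xm : s t < m by rewrite ltn_neqAle stm -ltnS ltn_ord.
move: (D (s t)); rewrite mem_iota xm => /(_ isT)/negP; apply; apply/adjacentP.
exists t; rewrite size_word -ut ltn_ord !nth_word sus; split=> //.
by rewrite /= modn_small.
Qed.

Lemma card_in_D_first0_count m :
  #|[set s : 'S_m.+1 | in_D s & s ord0 == ord0]|
  = count (avoids succession (iota 0 m)) (zero_first_perms m).
Proof.
rewrite /zero_first_perms count_filter -card_perm_word; apply: eq_card => s.
rewrite !inE ohead_word /=; have [s0 | s0] := eqVneq (s ord0) ord0.
  by rewrite in_D_first0 // s0 andbT.
rewrite andbF; symmetry; apply/andP => -[_ /eqP[s00]].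
by move/eqP: s0; apply; apply: val_inj.
Qed.

Lemma Der_avoids m : Der m = count (avoids fixpt (iota 0 m)) (permutations (iota 0 m)).
Proof.
rewrite /Der -card_perm_word; apply: eq_card => s; rewrite !inE.
apply/forallP/allP => [s_fix x | s_fix x].
  by rewrite mem_iota => xm; rewrite /fixpt -[x]/(nat_of_ord (Ordinal xm)) nth_word; apply: s_fix.
by have := s_fix x; rewrite mem_iota ltn_ord /fixpt nth_word; apply.
Qed.

Lemma size_permutations_iota m : size (permutations (iota 0 m)) = m`!.
Proof. by rewrite size_permutations ?iota_uniq ?size_iota. Qed.

Lemma exists_first_entry m (s : 'S_m.+1) k :
  [exists t : 'I_m.+1, (val t == 0) && (s t == k :> nat)] = (s ord0 == k :> nat).
Proof.
apply/existsP/idP => [[t /andP[/eqP t0]] | s0]; last by exists ord0.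
by have -> : t = ord0 by apply: val_inj.
Qed.

Unset Implicit Arguments.

Theorem corollary4p4 (n : nat) (i : nat) :
  3 <= n -> 1 <= i <= n ->
  #|[set s : 'S_n | in_D s & [exists t : 'I_n, (val t == 0) && (s t == i.-1 :> nat)]]|
  = Der n.-1.
Proof.
case: n => [|m] // _ /andP[i_pos i_le]; have im : i.-1 < m.+1 by lia.
have iota_lt : all (gtn m) (iota 0 m) by apply/allP => x; rewrite mem_iota.
have -> : [set s : 'S_m.+1 | in_D s & [exists t, (val t == 0) && (s t == i.-1 :> nat)]]
          = [set s | in_D s & s ord0 == Ordinal im].
  by apply/setP => s; rewrite !inE exists_first_entry.
rewrite card_in_D_first_eq0 card_in_D_first0_count Der_avoids.
rewrite (count_avoids size_zero_first_perms
           (fun _ _ _ am aT _ => count_succession_contract am aT)) ?iota_uniq //.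
by rewrite (count_avoids size_permutations_iota count_fixpt_contract) ?iota_uniq.
Qed.
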